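(* Let $H$ be an edge-critical graph with $\chi(H)=r+1\ge3$. For every $r$-tuple $S=(S_1,\dots,S_r)$ of pairwise disjoint subsets of $[n]$ with $|S_1|>v_H$ and every graph $Q\subseteq K_n$ all of whose edges have both endpoints in $S_1$, \[ |\mathcal{F}_Q^{\mathrm{low}}[\mathrm{ext}(S)]|\ge\Big(1-\frac{v_H^2\,\Delta(Q)}{|S_1|-v_H}\Big)\cdot e(Q)\cdot N(H,K_S^+), \] where $K_S^+=\mathrm{ext}(S)\cup\{uv\}$ for two distinct vertices $u,v\in S_1$.
   Context: Graphs are identified with edge sets. $\mathrm{ext}(S)$ is the set of pairs of vertices meeting two distinct $S_i$. $\mathcal{H}$ is the family of all copies of $H$ in $K_n$ (as edge sets). $\mathcal{H}_Q^{\mathrm{low}}=\{A\in\mathcal{H}: |A\cap Q|=1 \text{ and } Q[V(A)] \text{ has exactly one edge}\}$ and $\mathcal{F}_Q^{\mathrm{low}}=\{A\setminus Q: A\in\mathcal{H}_Q^{\mathrm{low}}\}$. For a family $\mathcal{F}$ of edge sets and a graph $G$, $\mathcal{F}[G]=\{\omega\in\mathcal{F}:\omega\subseteq G\}$. $N(H,G)$ is the number of copies of $H$ in $G$; $\Delta(Q)$ is the maximum degree. *)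

From mathcomp Require Import all_boot all_order all_algebra.
Set Implicit Arguments. Unset Strict Implicit. Unset Printing Implicit Defensive.

(* Graphs on vertex set [n] = 'I_n are identified with their edge sets:
   sets of 2-element subsets of 'I_n. The pattern graph H is given as a
   symmetric irreflexive relation eH on a finite type V (v_H = #|V|). *)

Section Defs.
Variable V : finType.

Definition colorable (e : rel V) (k : nat) : Prop :=
  exists c : V -> 'I_k, forall x y, e x y -> c x != c y.

Definition chromatic_number (e : rel V) (k : nat) : Prop :=
  colorable e k /\ forall j, j < k -> ~ colorable e j.

Definition remove_edge (e : rel V) (x y : V) : rel V :=
  fun a b => e a b && ~~ (((a == x) && (b == y)) || ((a == y) && (b == x))).

Definition edge_critical (e : rel V) : Prop :=
  exists x y k, [/\ e x y, chromatic_number e k &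
                  exists j, j < k /\ chromatic_number (remove_edge e x y) j].

Variable n : nat.

Definition copies (e : rel V) : {set {set {set 'I_n}}} :=
  [set A : {set {set 'I_n}} | [exists f : {ffun V -> 'I_n},
      injectiveb f && (A == [set [set f p.1; f p.2] | p in [set p : V * V | e p.1 p.2]])]].

Definition Ncopies (e : rel V) (G : {set {set 'I_n}}) : nat :=
  #|[set A in copies e | A \subset G]|.

End Defs.

Section Defs2.
Variable n : nat.

Definition Kn : {set {set 'I_n}} := [set e : {set 'I_n} | #|e| == 2].

Definition vspan (A : {set {set 'I_n}}) : {set 'I_n} :=
  [set x : 'I_n | [exists e in A, x \in e]].

Definition induced (Q : {set {set 'I_n}}) (W : {set 'I_n}) : {set {set 'I_n}} :=
  [set e in Q | e \subset W].

Definition maxdeg (Q : {set {set 'I_n}}) : nat :=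
  \max_(x : 'I_n) #|[set e in Q | x \in e]|.

Definition ext (r : nat) (S : 'I_r -> {set 'I_n}) : {set {set 'I_n}} :=
  [set e : {set 'I_n} | [exists i : 'I_r, exists j : 'I_r, exists x : 'I_n,
     exists y : 'I_n, [&& i != j, x \in S i, y \in S j & e == [set x; y]]]].

Definition restrict (F : {set {set {set 'I_n}}}) (G : {set {set 'I_n}}) :=
  [set w in F | w \subset G].
End Defs2.

Definition H_low (V : finType) (n : nat) (e : rel V) (Q : {set {set 'I_n}}) :
  {set {set {set 'I_n}}} :=
  [set A in copies n e | (#|A :&: Q| == 1) && (#|induced Q (vspan A)| == 1)].

Definition F_low (V : finType) (n : nat) (e : rel V) (Q : {set {set 'I_n}}) :
  {set {set {set 'I_n}}} :=
  [set A :\: Q | A in H_low e Q].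

(* Write S1 for the distinguished part S i1 and, for an edge e of K_n, let
   C(e) be the set of copies of H inside ext(S) + e, so that
   N(H, K_S^+) = |C(uv)|.  The proof has four ingredients.
   1. H is not r-colourable, while colouring each vertex by the index of its
      part properly colours ext(S); hence every copy in C(e) contains e.
   2. Transpositions of two vertices of S1 preserve ext(S), so they map C(e)
      injectively into C(e') for edges e, e' inside S1; thus
      N(H, K_S^+) <= |C(e)| for every edge e of Q.
   3. Fix e in Q and call A in C(e) lonely when Q[V(A)] = {e}, crowded
      otherwise.  A crowded copy has a Q-edge cd inside V(A) with c in S1 \ e;
      swapping c with any w in S1 \ V(A) yields a copy of C(e) in which w, d are
      vertices and c is a Q-neighbour of d.  This injection gives
      |crowded| (|S1| - v_H) <= |C(e)| v_H^2 Delta(Q).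
   4. A |-> A \ Q maps the pairs (e, A) with A lonely in C(e) injectively into
      F_Q^low[ext(S)]: two lonely copies of distinct edges with the same
      image would yield an r-colouring of H.
   Summing the bound |lonely(e)| >= (1 - v_H^2 Delta(Q)/(|S1| - v_H)) N over
   e in Q proves the theorem. *)

From mathcomp Require Import all_boot all_order all_algebra fingroup perm.
From mathcomp Require Import lra.
Import Order.TTheory GRing.Theory Num.Theory.
Set Implicit Arguments. Unset Strict Implicit. Unset Printing Implicit Defensive.

Lemma card_pairs_dep (T1 T2 : finType) (X : {set T1}) (g : T1 -> {set T2}) :
  #|[set p : T1 * T2 | (p.1 \in X) && (p.2 \in g p.1)]| = \sum_(x in X) #|g x|.
Proof.
rewrite -sum1_card; under eq_bigl do rewrite inE.
rewrite -(pair_big_dep (fun x => x \in X) (fun x y => y \in g x) (fun _ _ => 1)) /=.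
by apply: eq_bigr => x _; rewrite sum1_card.
Qed.

Lemma card_pairs_dep_le (T1 T2 : finType) (X : {set T1}) (g : T1 -> {set T2}) k :
  (forall x, x \in X -> #|g x| <= k) ->
  #|[set p : T1 * T2 | (p.1 \in X) && (p.2 \in g p.1)]| <= #|X| * k.
Proof. by move=> le_gk; rewrite card_pairs_dep -sum_nat_const; apply: leq_sum. Qed.

Lemma card_pairs_dep_ge (T1 T2 : finType) (X : {set T1}) (g : T1 -> {set T2}) k :
  (forall x, x \in X -> k <= #|g x|) ->
  #|X| * k <= #|[set p : T1 * T2 | (p.1 \in X) && (p.2 \in g p.1)]|.
Proof. by move=> le_kg; rewrite card_pairs_dep -sum_nat_const; apply: leq_sum. Qed.

Lemma set2_eq_cases (T : finType) (x y x' y' : T) : x != y ->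
  [set x; y] = [set x'; y'] -> (x = x' /\ y = y') \/ (x = y' /\ y = x').
Proof.
move=> nxy E.
have hx : x \in [set x'; y'] by rewrite -E set21.
have hy : y \in [set x'; y'] by rewrite -E set22.
have hx' : x' \in [set x; y] by rewrite E set21.
move: hx hy hx'; rewrite !inE => /orP[]/eqP hx /orP[]/eqP hy /orP[]/eqP hx'; subst;
  first [by rewrite eqxx in nxy | auto].
Qed.

Lemma tperm_fix_set (T : finType) (c w : T) (e : {set T}) :
  c \notin e -> w \notin e -> [set tperm c w x | x in e] = e.
Proof.
move=> ce we; rewrite -[RHS]imset_id; apply: eq_in_imset => x xe.
by rewrite tpermD //; apply: contraTneq xe => <-.
Qed.

Section Relabel.
Variable n : nat.

Definition relabel (s : {perm 'I_n}) (A : {set {set 'I_n}}) : {set {set 'I_n}} :=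
  [set [set s x | x in g] | g : {set 'I_n} in A].

Lemma relabel_inj (s : {perm 'I_n}) : injective (relabel s).
Proof. by apply: imset_inj; apply: imset_inj; apply: perm_inj. Qed.

Lemma vspan_relabel (s : {perm 'I_n}) A x :
  x \in vspan A -> s x \in vspan (relabel s A).
Proof.
rewrite !inE => /existsP[g /andP[gA xg]].
by apply/existsP; exists [set s y | y in g]; rewrite !imset_f.
Qed.

Lemma edge_sub_vspan (A : {set {set 'I_n}}) e : e \in A -> e \subset vspan A.
Proof.
by move=> eA; apply/subsetP => x xe; rewrite inE; apply/existsP; exists e; rewrite eA.
Qed.

End Relabel.

Section Copies.
Variables (V : finType) (eH : rel V) (n : nat).

Lemma copy_colorable (eH_irr : irreflexive eH) (r : nat) (A : {set {set 'I_n}})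
    (c : 'I_n -> 'I_r) :
  A \in copies n eH -> (forall x y, x != y -> [set x; y] \in A -> c x != c y) ->
  colorable eH r.
Proof.
rewrite inE => /existsP[f /andP[/injectiveP finj /eqP ->]] c_proper.
exists (fun x => c (f x)) => x y exy; apply: c_proper.
  by rewrite (inj_eq finj); apply: contraTneq exy => ->; rewrite eH_irr.
by apply/imsetP; exists (x, y); rewrite ?inE.
Qed.

Lemma relabel_copy (s : {perm 'I_n}) A :
  A \in copies n eH -> relabel s A \in copies n eH.
Proof.
rewrite !inE => /existsP[f /andP[/injectiveP finj /eqP ->]].
apply/existsP; exists [ffun x => s (f x)]; apply/andP; split.
  by apply/injectiveP => x y; rewrite !ffunE => /perm_inj /finj.
apply/eqP; rewrite /relabel -imset_comp; apply: eq_imset => p /=.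
by rewrite imsetU1 imset_set1 !ffunE.
Qed.

Lemma vspan_copy_card A : A \in copies n eH -> #|vspan A| <= #|V|.
Proof.
rewrite inE => /existsP[f /andP[_ /eqP ->]].
rewrite -cardsT; apply: leq_trans (leq_imset_card (fun x => f x) [set: V]).
apply/subset_leq_card/subsetP => x; rewrite inE => /existsP[g /andP[]].
by case/imsetP => p _ -> ; rewrite !inE => /orP[]/eqP->; rewrite imset_f ?inE.
Qed.

End Copies.

Section Parts.
Variables (n r : nat) (S : 'I_r -> {set 'I_n}).
Hypothesis Sdisj : forall i j : 'I_r, i != j -> [disjoint S i & S j].

Definition part_of (i0 : 'I_r) (x : 'I_n) : 'I_r := odflt i0 [pick i | x \in S i].

Lemma part_ofE i0 x i : x \in S i -> part_of i0 x = i.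
Proof.
move=> xi; rewrite /part_of; case: pickP => [k xk|/(_ i)]; last by rewrite xi.
apply/eqP; apply: contraT => nki.
by have := Sdisj nki; rewrite disjoint_subset => /subsetP/(_ x xk); rewrite inE xi.
Qed.

Lemma ext_part i0 x y :
  x != y -> [set x; y] \in ext S -> part_of i0 x != part_of i0 y.
Proof.
move=> nxy; rewrite inE => /existsP[i /existsP[j /existsP[x' /existsP[y']]]].
case/and4P=> nij xi yj /eqP /(set2_eq_cases nxy) [][-> ->];
  by rewrite (part_ofE i0 xi) (part_ofE i0 yj) // eq_sym.
Qed.

Lemma ext_not_in_part g i : g \in ext S -> ~~ (g \subset S i).
Proof.
rewrite inE => /existsP[j /existsP[k /existsP[x /existsP[y]]]].
case/and4P=> njk xj yk /eqP ->; apply/negP => /subsetP sub.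
move: njk; rewrite -(part_ofE i xj) -(part_ofE i yk).
by rewrite (part_ofE i (sub _ (set21 _ _))) (part_ofE i (sub _ (set22 _ _))) eqxx.
Qed.

Lemma tperm_in_part i1 c w x i :
  c \in S i1 -> w \in S i1 -> x \in S i -> tperm c w x \in S i.
Proof.
move=> ci wi xi; case: tpermP => [E|E|//]; subst x.
  by rewrite -(part_ofE i1 xi) (part_ofE i1 ci).
by rewrite -(part_ofE i1 xi) (part_ofE i1 wi).
Qed.

Lemma ext_tperm i1 c w g : c \in S i1 -> w \in S i1 -> g \in ext S ->
  [set tperm c w x | x in g] \in ext S.
Proof.
move=> ci wi; rewrite !inE => /existsP[i /existsP[j /existsP[x /existsP[y]]]].
case/and4P=> nij xi yj /eqP ->; rewrite imsetU1 imset_set1.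
apply/existsP; exists i; apply/existsP; exists j.
apply/existsP; exists (tperm c w x); apply/existsP; exists (tperm c w y).
by rewrite nij !(tperm_in_part ci wi) //=.
Qed.

Lemma relabel_ext_plus i1 c w (A : {set {set 'I_n}}) e :
  c \in S i1 -> w \in S i1 -> A \subset ext S :|: [set e] ->
  relabel (tperm c w) A \subset ext S :|: [set [set tperm c w x | x in e]].
Proof.
move=> ci wi /subsetP sA; apply/subsetP => _ /imsetP[g gA ->].
have := sA _ gA; rewrite !in_setU !in_set1 => /orP[ge|/eqP->]; last by rewrite eqxx orbT.
by rewrite (ext_tperm ci wi ge).
Qed.

End Parts.

Section ExtCopies.
Variables (V : finType) (eH : rel V) (n r : nat) (S : 'I_r -> {set 'I_n}).
Hypothesis Sdisj : forall i j : 'I_r, i != j -> [disjoint S i & S j].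

(* C(e): the copies of H inside ext(S) + e; its size is N(H, ext(S) + e). *)
Definition ext_copies (e : {set 'I_n}) : {set {set {set 'I_n}}} :=
  [set A in copies n eH | A \subset ext S :|: [set e]].

(* Ingredient 1: since H is not r-colourable, each copy in C(e) uses e. *)
Lemma ext_copy_has_edge (eH_irr : irreflexive eH) (notcol : ~ colorable eH r)
    (i0 : 'I_r) A e :
  A \in copies n eH -> A \subset ext S :|: [set e] -> e \in A.
Proof.
move=> Ac sA; apply: contraT => eA; case: notcol.
apply: (copy_colorable eH_irr (c := part_of S i0) Ac) => x y nxy xyA.
apply: ext_part => //; have := subsetP sA _ xyA.
by rewrite in_setU in_set1 => /orP[//|/eqP E]; rewrite -E xyA in eA.
Qed.

Lemma Ncopies_tperm i1 c w g : c \in S i1 -> w \in S i1 ->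
  Ncopies eH (ext S :|: [set g]) <=
  Ncopies eH (ext S :|: [set [set tperm c w x | x in g]]).
Proof.
move=> ci wi; rewrite /Ncopies -(card_imset _ (@relabel_inj n (tperm c w))).
apply/subset_leq_card/subsetP => B /imsetP[A]; rewrite inE => /andP[Ac sA] ->.
by rewrite inE relabel_copy // (relabel_ext_plus Sdisj ci wi).
Qed.

Lemma Ncopies_edge_le i1 u v a b :
  u != v -> a != b -> u \in S i1 -> v \in S i1 -> a \in S i1 -> b \in S i1 ->
  Ncopies eH (ext S :|: [set [set u; v]]) <= Ncopies eH (ext S :|: [set [set a; b]]).
Proof.
move=> nuv nab ui vi ai bi.
apply: leq_trans (Ncopies_tperm [set u; v] ui ai) _.
rewrite imsetU1 imset_set1 tpermL.
set v' := tperm u a v.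
have v'i : v' \in S i1 by apply: (tperm_in_part Sdisj ui ai vi).
have nv'a : v' != a.
  apply: contra nuv => /eqP E; apply/eqP/(@perm_inj _ (tperm u a)).
  by rewrite -/v' E tpermL.
apply: leq_trans (Ncopies_tperm [set a; v'] v'i bi) _.
by rewrite imsetU1 imset_set1 tpermL tpermD // eq_sym.
Qed.

End ExtCopies.

Section LowCopies.
Variables (V : finType) (eH : rel V) (n r : nat) (S : 'I_r -> {set 'I_n}).
Hypothesis eH_irr : irreflexive eH.
Hypothesis notcol : ~ colorable eH r.
Hypothesis Sdisj : forall i j : 'I_r, i != j -> [disjoint S i & S j].
Variables (i1 : 'I_r) (Q : {set {set 'I_n}}).
Hypothesis HQ : forall g, g \in Q -> #|g| = 2 /\ g \subset S i1.

Let C := ext_copies eH S.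

Definition nbr (d : 'I_n) : {set 'I_n} := [set c | [set c; d] \in Q].

Lemma card_nbr d : #|nbr d| <= maxdeg Q.
Proof.
apply: leq_trans (leq_bigmax d); rewrite -(card_in_imset (f := fun c => [set c; d])).
  apply/subset_leq_card/subsetP => _ /imsetP[c + ->].
  by rewrite !inE eqxx orbT andbT.
have ne_d c : c \in nbr d -> c != d.
  by rewrite inE; apply: contraTneq => ->; apply/negP => /HQ[]; rewrite setUid cards1.
move=> c c' cn c'n E; have : c \in [set c'; d] by rewrite -E set21.
by rewrite !inE (negbTE (ne_d c cn)) orbF => /eqP.
Qed.

Definition lonely_copies (e : {set 'I_n}) : {set {set {set 'I_n}}} :=
  [set A in C e | #|induced Q (vspan A)| == 1].
Definition crowded_copies (e : {set 'I_n}) : {set {set {set 'I_n}}} :=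
  [set A in C e | #|induced Q (vspan A)| != 1].

Lemma card_lonely_crowded e :
  #|lonely_copies e| + #|crowded_copies e| = #|C e|.
Proof.
rewrite -(cardsID [set A | #|induced Q (vspan A)| == 1] (C e)); congr (_ + _).
  by apply: eq_card => A; rewrite !inE.
by apply: eq_card => A; rewrite !inE andbC.
Qed.

Definition Qwitness (e : {set 'I_n}) (A : {set {set 'I_n}}) (p : 'I_n * 'I_n) :
    bool :=
  [&& p.2 \in S i1, p.2 \notin e, p.2 \in vspan A, p.1 \in vspan A
    & [set p.2; p.1] \in Q].

Lemma crowded_witness (e : {set 'I_n}) (A : {set {set 'I_n}}) :
  e \in Q -> e \in A -> #|induced Q (vspan A)| != 1 -> exists p, Qwitness e A p.
Proof.
move=> eQ eA crowded.
have eI : e \in induced Q (vspan A) by rewrite inE eQ edge_sub_vspan.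
have [f fI nfe] : exists2 f, f \in induced Q (vspan A) & f != e.
  apply/exists_inP; apply: contraR crowded => /exists_inPn only_e.
  apply/negPn/eqP; suff -> : induced Q (vspan A) = [set e] by rewrite cards1.
  apply/setP => g; rewrite [in RHS]inE.
  by apply/idP/idP => [gI|/eqP ->//]; have := only_e g gI; rewrite negbK.
move: fI; rewrite inE => /andP[fQ fsub].
have [f2 fS] := HQ fQ; have [e2 _] := HQ eQ.
have [c cf ce] : exists2 c, c \in f & c \notin e.
  apply/exists_inP; apply: contraR nfe => /exists_inPn sub_e.
  rewrite eqEcard f2 e2 leqnn andbT; apply/subsetP => x xf.
  by have := sub_e x xf; rewrite negbK.
move/eqP/cards2P: f2 => [x [y [nxy fE]]].
have [xv yv] : x \in vspan A /\ y \in vspan A.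
  by rewrite !(subsetP fsub) // fE !inE eqxx ?orbT.
have [xS yS] : x \in S i1 /\ y \in S i1 by rewrite !(subsetP fS) // fE !inE eqxx ?orbT.
move: cf; rewrite fE !inE => /orP[]/eqP Ec; subst c.
  by exists (y, x); rewrite /Qwitness /= ce xS xv yv -fE fQ.
by exists (x, y); rewrite /Qwitness /= ce yS xv yv setUC -fE fQ.
Qed.

Lemma swap_crowded (e : {set 'I_n}) (A : {set {set 'I_n}}) w d c :
  A \in C e -> w \in S i1 -> w \notin vspan A -> Qwitness e A (d, c) ->
  [/\ relabel (tperm c w) A \in C e, w \in vspan (relabel (tperm c w) A),
      d \in vspan (relabel (tperm c w) A) & c \in nbr d].
Proof.
move=> AC wS wv /and5P[/= cS ce cv dv cdQ].
have [Ac sA] : A \in copies n eH /\ A \subset ext S :|: [set e].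
  by move: AC; rewrite inE => /andP[].
have eA := ext_copy_has_edge Sdisj eH_irr notcol i1 Ac sA.
have we : w \notin e by apply: contra wv; apply/subsetP/edge_sub_vspan.
have ncd : c != d.
  by apply: contraTneq cdQ => ->; apply/negP => /HQ[]; rewrite setUid cards1.
have nwd : w != d by apply: contraNneq wv => ->.
split; last by rewrite inE.
- by rewrite inE relabel_copy //= -(tperm_fix_set ce we) (relabel_ext_plus Sdisj cS wS).
- by rewrite -{1}(tpermL c w) vspan_relabel.
- by rewrite -{1}(tpermD ncd nwd) vspan_relabel.
Qed.

Lemma card_crowded e : e \in Q ->
  #|crowded_copies e| * (#|S i1| - #|V|) <= #|C e| * (#|V| * (#|V| * maxdeg Q)).
Proof.
move=> eQ; set B := crowded_copies e.
pose Y := [set q : {set {set 'I_n}} * 'I_n | (q.1 \in C e) && (q.2 \in vspan q.1)].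
pose Z A := [set p : 'I_n * 'I_n | (p.1 \in vspan A) && (p.2 \in nbr p.1)].
pose T := [set t : ({set {set 'I_n}} * 'I_n) * ('I_n * 'I_n) |
             (t.1 \in Y) && (t.2 \in Z t.1.1)].
pose B2 := [set q : {set {set 'I_n}} * 'I_n |
             (q.1 \in B) && (q.2 \in S i1 :\: vspan q.1)].
pose wit A w := odflt (w, w) [pick p | Qwitness e A p].
pose swap q := ((relabel (tperm (wit q.1 q.2).2 q.2) q.1, q.2), wit q.1 q.2).
have BC A : A \in B -> A \in C e by rewrite inE => /andP[].
have copyC A : A \in C e -> A \in copies n eH by rewrite inE => /andP[].
have witP A w : A \in B -> Qwitness e A (wit A w).
  rewrite inE => /andP[]; rewrite inE => /andP[Ac sA] crowded.
  rewrite /wit; case: pickP => [p //|no_wit].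
  have eA := ext_copy_has_edge Sdisj eH_irr notcol i1 Ac sA.
  by have [p] := crowded_witness eQ eA crowded; rewrite no_wit.
have B_B2 : #|B| * (#|S i1| - #|V|) <= #|B2|.
  apply: (card_pairs_dep_ge (g := fun A => S i1 :\: vspan A)) => A /BC /copyC Ac.
  rewrite cardsD leq_sub2l // (leq_trans _ (vspan_copy_card Ac)) //.
  by rewrite subset_leq_card ?subsetIr.
have B2_T : #|B2| <= #|T|.
  rewrite -(card_in_imset (f := swap)); last first.
    move=> [A1 w1] [A2 w2] _ _ [/= E1 E2 E3]; subst w2.
    by rewrite E3 in E1; rewrite (relabel_inj E1).
  apply/subset_leq_card/subsetP => _ /imsetP[[A w] + ->].
  rewrite inE /= => /andP[AB]; rewrite inE => /andP[wv wS].
  have := witP A w AB; rewrite /swap /=; case: (wit A w) => d c hw.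
  have [AC' wA' dA' cd] := swap_crowded (BC A AB) wS wv hw.
  by rewrite inE /= [_ \in Y]inE [_ \in Z _]inE /= AC' wA' dA' cd.
have T_Y : #|T| <= #|Y| * (#|V| * maxdeg Q).
  apply: (card_pairs_dep_le (g := fun q => Z q.1)) => q.
  rewrite inE => /andP[/copyC qC _].
  apply: leq_trans (card_pairs_dep_le (fun d _ => card_nbr d)) _.
  by rewrite leq_mul2r (vspan_copy_card qC) orbT.
have Y_C : #|Y| <= #|C e| * #|V|.
  by apply: (card_pairs_dep_le (g := @vspan n)) => A /copyC; apply: vspan_copy_card.
apply: leq_trans B_B2 (leq_trans B2_T (leq_trans T_Y _)); rewrite [X in _ <= X]mulnA.
by rewrite leq_mul2r Y_C orbT.
Qed.

Lemma lonely_spec (e : {set 'I_n}) (A : {set {set 'I_n}}) :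
  e \in Q -> A \in lonely_copies e ->
  [/\ A \in copies n eH, e \in A, induced Q (vspan A) = [set e],
      A :&: Q = [set e] & A :\: Q = A :\ e /\ A :\: Q \subset ext S].
Proof.
move=> eQ; rewrite inE => /andP[]; rewrite inE => /andP[Ac sA] /cards1P[f If].
have eA := ext_copy_has_edge Sdisj eH_irr notcol i1 Ac sA.
have ext_other g : g \in A -> g != e -> g \in ext S.
  by move=> gA nge; have := subsetP sA g gA; rewrite !inE (negbTE nge) orbF.
have not_Q g : g \in A -> g != e -> g \notin Q.
  by move=> gA nge; apply/negP => /HQ[_]; apply/negP/(ext_not_in_part Sdisj)/ext_other.
have DQ : A :\: Q = A :\ e.
  apply/setP => g; rewrite !inE; have [->|nge] := eqVneq g e; first by rewrite eQ.
  by case gA: (g \in A); rewrite ?andbF //= (not_Q g gA nge).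
split=> //.
- have : e \in induced Q (vspan A) by rewrite inE eQ edge_sub_vspan.
  by rewrite If inE => /eqP <-.
- apply/setP => g; rewrite !inE; have [->|nge] := eqVneq g e; first by rewrite eA eQ.
  by case gA: (g \in A); rewrite //= (negbTE (not_Q g gA nge)).
- rewrite DQ; split=> //; apply/subsetP => g.
  by rewrite in_setD1 => /andP[nge /ext_other]; apply.
Qed.

Lemma lonely_low (e : {set 'I_n}) (A : {set {set 'I_n}}) :
  e \in Q -> A \in lonely_copies e ->
  A :\: Q \in restrict (F_low eH Q) (ext S).
Proof.
move=> eQ Al; have [Ac _ _ AQ [_ sub]] := lonely_spec eQ Al.
move: Al; rewrite inE => /andP[_ l1].
by rewrite inE sub andbT; apply: imset_f; rewrite inE Ac /= AQ cards1 l1.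
Qed.

(* Two lonely copies of distinct Q-edges have distinct images, since
   otherwise recolouring one endpoint of the second edge colours H. *)
Lemma lonely_cross i2 (e1 e2 : {set 'I_n}) (A1 A2 : {set {set 'I_n}}) :
  i2 != i1 -> e1 \in Q -> e2 \in Q -> e1 != e2 ->
  A1 \in lonely_copies e1 -> A2 \in lonely_copies e2 -> A1 :\: Q != A2 :\: Q.
Proof.
move=> ni e1Q e2Q ne A1l A2l; apply/eqP => E.
have [_ _ I1 _ _] := lonely_spec e1Q A1l.
have [A2c _ _ _ [D2 sub2]] := lonely_spec e2Q A2l.
have [z ze2 zn] : exists2 z, z \in e2 & z \notin vspan A1.
  apply/exists_inP; apply: contraNT ne => /exists_inPn in_span.
  have : e2 \in induced Q (vspan A1).
    by rewrite inE e2Q; apply/subsetP => x /in_span; rewrite negbK.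
  by rewrite I1 inE eq_sym.
have [_ e2S] := HQ e2Q.
apply: notcol; pose c x := if x == z then i2 else part_of S i1 x.
apply: (copy_colorable eH_irr (c := c) A2c) => x y nxy xyA.
have [Exy|nxye] := eqVneq [set x; y] e2.
  have [xS yS] : x \in S i1 /\ y \in S i1.
    by rewrite !(subsetP e2S) // -Exy !inE eqxx ?orbT.
  move: ze2; rewrite -Exy !inE /c => /orP[]/eqP ->.
    by rewrite [y == x]eq_sym (negbTE nxy) (part_ofE Sdisj _ yS) eqxx.
  by rewrite eqxx (negbTE nxy) (part_ofE Sdisj _ xS) eq_sym.
have xyQ : [set x; y] \in A2 :\: Q by rewrite D2 !inE nxye xyA.
have /edge_sub_vspan/subsetP sv : [set x; y] \in A1.
  by move: xyQ; rewrite -E inE => /andP[].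
have xz : x != z by apply: contraNneq zn => <-; rewrite sv ?set21.
have yz : y != z by apply: contraNneq zn => <-; rewrite sv ?set22.
by rewrite /c (negbTE xz) (negbTE yz) ext_part // (subsetP sub2).
Qed.

(* Ingredient 4: A |-> A \ Q is injective on lonely pairs (e, A). *)
Lemma sum_lonely_le i2 : i2 != i1 ->
  \sum_(e in Q) #|lonely_copies e| <= #|restrict (F_low eH Q) (ext S)|.
Proof.
move=> ni; rewrite -card_pairs_dep -(card_in_imset (f := fun p => p.2 :\: Q)).
  apply/subset_leq_card/subsetP => _ /imsetP[[e A] + ->].
  by rewrite in_set /= => /andP[eQ Al]; apply: lonely_low eQ Al.
move=> [e1 A1] [e2 A2]; rewrite in_set => /andP[/= e1Q A1l].
rewrite in_set => /andP[/= e2Q A2l] /= E.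
have [e12|ne] := eqVneq e1 e2; last first.
  by case/negP: (lonely_cross ni e1Q e2Q ne A1l A2l); apply/eqP.
subst e2; have [_ e1A1 _ _ [D1 _]] := lonely_spec e1Q A1l.
have [_ e1A2 _ _ [D2 _]] := lonely_spec e1Q A2l.
by rewrite -(setD1K e1A1) -(setD1K e1A2) -D1 -D2 E.
Qed.

Local Open Scope ring_scope.

Lemma card_lonely_lb e u v : e \in Q -> u != v -> u \in S i1 -> v \in S i1 ->
  (#|V| < #|S i1|)%N ->
  (1 - ((#|V| ^ 2 * maxdeg Q)%N)%:R / (#|S i1|%:R - #|V|%:R : rat))
    * (Ncopies eH (ext S :|: [set [set u; v]]))%:R
  <= #|lonely_copies e|%:R.
Proof.
move=> eQ nuv uS vS ltVS.
set N := Ncopies _ _; set x := _ / _.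
have [/eqP/cards2P[a [b [nab Ee]]] eS] := HQ eQ.
have [aS bS] : a \in S i1 /\ b \in S i1 by rewrite !(subsetP eS) // Ee !inE eqxx ?orbT.
have N_C : (N <= #|C e|)%N.
  by rewrite Ee; exact: (Ncopies_edge_le eH Sdisj nuv nab uS vS aS bS).
have den : 0 < #|S i1|%:R - #|V|%:R :> rat by rewrite subr_gt0 ltr_nat.
have crowdedR : #|crowded_copies e|%:R <= x * #|C e|%:R.
  rewrite /x mulrAC ler_pdivlMr // -natrB ?(ltnW ltVS) // -!natrM ler_nat.
  by rewrite [X in (_ <= X)%N]mulnC -mulnn -mulnA card_crowded.
have lonelyR : #|lonely_copies e|%:R = #|C e|%:R - #|crowded_copies e|%:R :> rat.
  by rewrite -card_lonely_crowded natrD addrK.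
have [x_le1|x_gt1] := lerP 0 (1 - x).
  apply: le_trans (_ : (1 - x) * #|C e|%:R <= _); first by rewrite ler_wpM2l // ler_nat.
  rewrite lonelyR mulrBl mul1r; lra.
by apply: le_trans (ler0n _ _); apply: mulr_le0_ge0; [apply: ltW | apply: ler0n].
Qed.

End LowCopies.

Local Open Scope ring_scope.

Theorem mainTheorem11 (V : finType) (eH : rel V)
  (eH_sym : symmetric eH) (eH_irr : irreflexive eH)
  (r : nat) (hr : (1 < r)%N)
  (Hcrit : edge_critical eH) (Hchi : chromatic_number eH r.+1)
  (n : nat) (S : 'I_r -> {set 'I_n})
  (Sdisj : forall i j : 'I_r, i != j -> [disjoint S i & S j])
  (HS1 : (#|V| < #|S (Ordinal (ltnW hr))|)%N)
  (Q : {set {set 'I_n}})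
  (HQ : forall e, e \in Q -> e \in Kn n /\ e \subset S (Ordinal (ltnW hr)))
  (u v : 'I_n) (huv : u != v)
  (hu : u \in S (Ordinal (ltnW hr))) (hv : v \in S (Ordinal (ltnW hr))) :
  (1 - ((#|V| ^ 2 * maxdeg Q)%N)%:R
         / (#|S (Ordinal (ltnW hr))|%:R - #|V|%:R : rat))
    * #|Q|%:R * (Ncopies eH (ext S :|: [set [set u; v]]))%:R
  <= (#|restrict (F_low eH Q) (ext S)|)%:R.
Proof.
set i1 := Ordinal (ltnW hr).
have ni : (Ordinal hr : 'I_r) != i1 by [].
have notcol : ~ colorable eH r by move=> col_r; apply: Hchi.2 r (ltnSn r) col_r.
have HQ2 g : g \in Q -> #|g| = 2 /\ g \subset S i1.
  by move=> /HQ[]; rewrite inE => /eqP -> ->.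
apply: le_trans (_ : (\sum_(e in Q) #|lonely_copies eH S Q e|)%:R <= _); last first.
  by rewrite ler_nat (sum_lonely_le eH_irr notcol Sdisj HQ2 ni).
rewrite natr_sum mulrAC mulr_natr -sumr_const; apply: ler_sum => e eQ.
exact: (card_lonely_lb eH_irr notcol Sdisj HQ2 eQ huv hu hv HS1).
Qed.
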